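(* Let $t$ be a partial function from $X^M$ to $X$ which is thrifty and belongs to $\mathscr C_J$. Then for every $n\in\omega$ the set $t^{-1}[\omega\times\{n\}]$ is bounded.
   Context: $X=\omega\times\omega$, elements $(a|b)$ ($x$-coordinate $a$, $y$-coordinate $b$); $M=\{1,\dots,m\}$. $J$ is the ideal of subsets of $X$ meeting each line $\omega\times\{n\}$ in a finite set; $\mathscr C_J$ is the set of finitary operations $f:X^k\to X$ with $f[A^k]\in J$ for all $A\in J$; a partial function from $X^M$ to $X$ is in $\mathscr C_J$ iff it has a total extension in $\mathscr C_J$. $B^M_k=\{u\in X^M:\exists i\in M\,((u_i)^y<k)\}$; a subset of $X^M$ is bounded iff contained in some $B^M_k$; $t$ is thrifty iff $t^{-1}[d]$ is bounded for all $d\in X$. *)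

From mathcomp Require Import all_boot.
Set Implicit Arguments. Unset Strict Implicit. Unset Printing Implicit Defensive.

(* X = omega x omega; a point (a|b) is the pair (a, b): x-coordinate a = .1,
   y-coordinate b = .2.  Subsets of X are predicates X -> Prop. *)
Definition X : Type := (nat * nat)%type.

Definition inJ (A : X -> Prop) : Prop :=
  forall n : nat, exists N : nat, forall a : nat, A (a, n) -> a < N.

(* X^M with M = {1,...,m} is represented as functions 'I_m -> X. *)
Definition XM (m : nat) : Type := 'I_m -> X.

Definition in_CJ_total (m : nat) (f : XM m -> X) : Prop :=
  forall A : X -> Prop, inJ A ->
    inJ (fun d => exists u : XM m, (forall i, A (u i)) /\ f u = d).

Definition pfun (m : nat) : Type := XM m -> option X.

Definition in_CJ (m : nat) (t : pfun m) : Prop :=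
  exists f : XM m -> X, in_CJ_total f /\ forall u d, t u = Some d -> f u = d.

Definition BMk (m k : nat) (u : XM m) : Prop := exists i : 'I_m, (u i).2 < k.

Definition bounded (m : nat) (S : XM m -> Prop) : Prop :=
  exists k : nat, forall u, S u -> BMk k u.

Definition tpreim (m : nat) (t : pfun m) (D : X -> Prop) : XM m -> Prop :=
  fun u => exists d, t u = Some d /\ D d.

Definition thrifty (m : nat) (t : pfun m) : Prop :=
  forall d : X, bounded (tpreim t (fun e : X => e = d)).

From Stdlib Require Import Classical ClassicalEpsilon.
From mathcomp Require Import all_boot.
Set Implicit Arguments. Unset Strict Implicit. Unset Printing Implicit Defensive.

(* Let f be a total extension of t in C_J and suppose, for a
   contradiction, that the preimage t^{-1}[omega x {n}] is unbounded.
   Thriftiness gives, for every point (a|n), a level [bnd a] such that every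
   u with t u = (a|n) has a coordinate below height [bnd a].  Using a
   staircase K k >= k, bnd 0, ..., bnd (k-1), unboundedness yields tuples
   U k in the preimage all of whose coordinates lie at height >= K k; hence
   t (U k) = (a_k|n) with a_k >= k.  The coordinates of all the U k form a
   set A in J (a line omega x {j} only meets U 0, ..., U j), so f[A^M] must
   be in J, yet it contains the points (a_k|n) with a_k unbounded. *)

Definition escaping (m : nat) (U : nat -> XM m) : Prop :=
  forall k (i : 'I_m), k <= (U k i).2.

Definition coords (m : nat) (U : nat -> XM m) (x : X) : Prop :=
  exists k i, U k i = x.

(* The coordinates of an escaping family meet line j only inside
   U 0, ..., U j, so they form a set in J. *)
Lemma coords_escaping_inJ (m : nat) (U : nat -> XM m) :
  escaping U -> inJ (coords U).
Proof.
move=> escU j; exists (\max_(k < j.+1) \max_(i < m) (U k i).1).+1.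
move=> a [k [i Uki]].
have lt_kj : k < j.+1 by rewrite ltnS; have := escU k i; rewrite Uki.
rewrite ltnS; apply: leq_trans (leq_bigmax (Ordinal lt_kj)) => /=.
by have := leq_bigmax (F := fun i => (U k i).1) i; rewrite Uki.
Qed.

Lemma CJ_escaping_image (m : nat) (f : XM m -> X) (U : nat -> XM m) (n : nat) :
  in_CJ_total f -> escaping U ->
  exists N, forall k, (f (U k)).2 = n -> (f (U k)).1 < N.
Proof.
move=> fCJ escU; have [N HN] := fCJ _ (coords_escaping_inJ escU) n.
exists N => k fUk_n; apply: HN; rewrite -fUk_n -surjective_pairing.
by exists (U k); split=> // i; exists k, i.
Qed.

Definition staircase (bnd : nat -> nat) (k : nat) : nat :=
  maxn k (\max_(a < k) bnd a).

Lemma staircase_ge (bnd : nat -> nat) (k : nat) : k <= staircase bnd k.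
Proof. exact: leq_maxl. Qed.

Lemma staircase_bnd (bnd : nat -> nat) (a k : nat) :
  a < k -> bnd a <= staircase bnd k.
Proof.
move=> lt_ak; apply: leq_trans (leq_maxr _ _).
exact: leq_bigmax (fun a : 'I_k => bnd a) (Ordinal lt_ak).
Qed.

Lemma unbounded_high (m : nat) (S : XM m -> Prop) :
  ~ bounded S -> forall k, exists u, S u /\ forall i, k <= (u i).2.
Proof.
move=> unbS k; apply: NNPP => noHigh; apply: unbS; exists k => u Su.
apply: NNPP => notB; apply: noHigh; exists u; split=> // i.
by rewrite leqNgt; apply/negP => lt_uk; apply: notB; exists i.
Qed.

Lemma thrifty_levels (m : nat) (t : pfun m) (n : nat) :
  thrifty t -> exists bnd : nat -> nat,
    forall a u, t u = Some (a, n) -> BMk (bnd a) u.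
Proof.
move=> tthr; have [bnd Hbnd] := choice _ (fun a => tthr (a, n)).
by exists bnd => a u tu; apply: Hbnd; exists (a, n).
Qed.

Lemma value_above_staircase (m : nat) (t : pfun m) (n : nat)
    (bnd : nat -> nat) (k a : nat) (u : XM m) :
  (forall a u, t u = Some (a, n) -> BMk (bnd a) u) ->
  (forall i, staircase bnd k <= (u i).2) -> t u = Some (a, n) -> k <= a.
Proof.
move=> Hbnd high tu; rewrite leqNgt; apply/negP => lt_ak.
have [i lt_ui] := Hbnd a u tu.
have := leq_trans lt_ui (staircase_bnd bnd lt_ak).
by rewrite ltnNge high.
Qed.

Theorem mainTheorem10 (m : nat) (t : pfun m) :
  thrifty t -> in_CJ t ->
  forall n : nat, bounded (tpreim t (fun d : X => d.2 = n)).
Proof.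
move=> tthr [f [fCJ ext_f]] n; apply: NNPP => unb.
have [bnd Hbnd] := thrifty_levels n tthr.
have [U HU] := choice _ (fun k => unbounded_high unb (staircase bnd k)).
have escU : escaping U.
  by move=> k i; apply: leq_trans (staircase_ge bnd k) ((HU k).2 i).
have onLine k : exists a, t (U k) = Some (a, n) /\ k <= a.
  have [[[a b] [tUk /= b_n]] high] := HU k; subst b.
  by exists a; split=> //; apply: value_above_staircase Hbnd high tUk.
have [N boundN] := CJ_escaping_image n fCJ escU.
have [a [tUN le_Na]] := onLine N.
have := boundN N; rewrite (ext_f _ _ tUN) => /(_ erefl) /=.
by rewrite ltnNge le_Na.
Qed.
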